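(* Let $D$ be a regular $(v,k,\lambda,\mu)$-PDS in a finite group $G$ with $0<\mu<k$ and $\sqrt\Delta\in\mathbb{Z}$. Let $p$ be a prime dividing $\sqrt\Delta$ and $p^\ell$ the exact power of $p$ dividing $\sqrt\Delta$. If $h\in G$, $h\ne1$, and $p^\ell\nmid|C_G(h)|$, then \[|h^G\cap D|\,|C_G(h)|\equiv k-\theta_2\pmod{p^\ell},\] and for $h=1$, $|h^G\cap D|\,|C_G(h)|\equiv k+\theta_2(|G|-1)\pmod{p^\ell}$.
   Context: A $(v,k,\lambda,\mu)$-PDS in a group $G$ of order $v$ is a $k$-subset $D$ such that every nonidentity element of $D$ is $xy^{-1}$ ($x,y\in D$) in exactly $\lambda$ ways and every nonidentity element of $G\setminus D$ in exactly $\mu$ ways; regular means $D=D^{(-1)}$ and $1\notin D$. $\Delta=(\lambda-\mu)^2+4(k-\mu)$, $\theta_2=\frac12(\lambda-\mu-\sqrt\Delta)$. *)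

From HB Require Import structures.
From mathcomp Require Import all_boot all_order all_algebra all_fingroup.
Set Implicit Arguments. Unset Strict Implicit. Unset Printing Implicit Defensive.
Import GRing.Theory Num.Theory.

Definition nrep (gT : finGroupType) (D : {set gT}) (g : gT) : nat :=
  #|[set xy : gT * gT | [&& xy.1 \in D, xy.2 \in D & (xy.1 * xy.2^-1)%g == g]]|.

Definition is_PDS (gT : finGroupType) (G : {group gT}) (D : {set gT})
    (v k lam mu : nat) : Prop :=
  [/\ D \subset G, #|G| = v, #|D| = k &
      forall g, g \in G -> g != 1%g ->
        nrep D g = (if g \in D then lam else mu)].

Definition regular_PDS (gT : finGroupType) (D : {set gT}) : Prop :=
  [set (x^-1)%g | x in D] = D /\ (1%g \notin D).

Definition PDS_Delta (k lam mu : nat) : int :=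
  ((lam%:Z - mu%:Z) ^+ 2 + 4 * (k%:Z - mu%:Z))%R.

(* theta_2 = (lambda - mu - sqrt Delta)/2, given s = sqrt Delta (a nonnegative
   integer); this division is exact since s^2 = Delta forces s = lambda - mu mod 2 *)
Definition theta2 (lam mu s : nat) : int :=
  ((lam%:Z - mu%:Z - s%:Z) %/ 2)%Z.

From HB Require Import structures.
From mathcomp Require Import all_boot all_order all_algebra all_fingroup all_field all_character.
From mathcomp Require Import ring zify.
Set Implicit Arguments.
Unset Strict Implicit.
Unset Printing Implicit Defensive.
Import GRing.Theory Num.Theory.
Local Open Scope ring_scope.

(* Let M and E be the images, under a representation of G, of the group-ring
   elements D and G/|G|.  Then E is idempotent, ME = EM = kE, and the PDS
   equation D D^(-1) = (k - mu) + (lambda - mu) D + mu G gives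
   M^2 = (k - mu) + (lambda - mu) M + mu |G| E.  Off the image of E, M is thus
   annihilated by (x - theta_2)(x - theta_1) with theta_1 - theta_2 = sqrt Delta,
   so tr M = theta_2 n + sqrt Delta * r + (k - theta_2) tr E with r a rank.
   For an irreducible chi this reads
   chi(D) = theta_2 chi(1) + sqrt Delta * r_chi + (k - theta_2) [chi = 1], and the
   second orthogonality relation |h^G cap D| |C_G(h)| = sum_chi chi(h) conj(chi(D))
   shows that this count is theta_2 |G| [h = 1] + k - theta_2 plus sqrt Delta
   times a rational algebraic integer.  The congruence therefore holds modulo
   sqrt Delta itself. *)

Lemma mxtrace_pid (R : pzRingType) n r : (r <= n)%N ->
  \tr (pid_mx r : 'M[R]_n) = r%:R.
Proof.
move=> le_rn; rewrite /mxtrace (eq_bigr (fun i : 'I_n => (i < r)%:R)); last first.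
  by move=> i _; rewrite mxE eqxx.
rewrite -(big_mkord xpredT (fun i => (i < r)%:R)) (big_cat_nat (leq0n r) le_rn) /=.
rewrite [X in _ + X]big1_seq ?addr0; last first.
  by move=> i; rewrite mem_index_iota => /andP[_ /andP[/leq_gtF->]].
rewrite (eq_big_seq (fun=> 1)) ?sumr_const_nat ?subn0 // => i.
by rewrite mem_index_iota => /andP[_ ->].
Qed.

Lemma mxtrace_idem (F : fieldType) n (P : 'M[F]_n) :
  P *m P = P -> \tr P = (\rank P)%:R.
Proof.
move=> idemP; set C := col_ebase P; set R := row_ebase P.
set I := pid_mx (\rank P) : 'M[F]_n.
have defP : P = C *m I *m R by rewrite mulmx_ebase.
have II : I *m I = I by rewrite pid_mx_id ?rank_leq_row.
have I_RC_I : I *m (R *m C) *m I = I.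
  apply: (can_inj (mulKmx (col_ebase_unit P)) (x2 := I)).
  apply: (can_inj (mulmxK (row_ebase_unit P)) (x2 := C *m I)) => /=.
  by rewrite -/C -/R -defP -idemP defP !mulmxA.
rewrite {1}defP -mulmxA mxtrace_mulC -{1}II.
by rewrite -!mulmxA mxtrace_mulC I_RC_I mxtrace_pid ?rank_leq_row.
Qed.

Lemma mxtrace_quadratic (F : fieldType) n (A E : 'M[F]_n) (t s : F) :
    s != 0 -> E *m E = E -> A *m E = 0 ->
    (A - t *: (1%:M - E)) *m (A - (t + s) *: (1%:M - E)) = 0 ->
  \tr A = t * (n%:R - \tr E) + s * (\rank (A - t *: (1%:M - E)))%:R.
Proof.
move=> nz_s idE AE.
set Q := 1%:M - E; set B := A - t *: Q => BB.
have QQ : Q *m Q = Q by rewrite mulmxBl mul1mx mulmxBr mulmx1 idE subrr subr0.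
have BQ : B *m Q = B.
  by rewrite mulmxBl -scalemxAl QQ mulmxBr mulmx1 AE subr0.
have idemP : (s^-1 *: B) *m (s^-1 *: B) = s^-1 *: B.
  rewrite -scalemxAl -scalemxAr scalerA.
  have -> : B *m B = s *: B.
    have BsQ : A - (t + s) *: Q = B - s *: Q by rewrite /B scalerDl opprD addrA.
    apply/eqP; rewrite -subr_eq0 -{3}BQ scalemxAr -mulmxBr -BsQ BB //.
  by rewrite scalerA divfK.
have trB : \tr B = s * (\rank B)%:R.
  by rewrite -(mxrank_scale_nz _ (invr_neq0 nz_s)) -mxtrace_idem // mxtraceZ mulVKf.
have trQ : \tr Q = n%:R - \tr E by rewrite raddfB /= mxtrace1.
by rewrite -trQ -trB addrC raddfB /= mxtraceZ subrK.
Qed.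

Section QuadraticMatrixAlgebra.

Variables (F : fieldType) (n : nat) (M E : 'M[F]_n) (a b c k : F).
Hypotheses (idE : E *m E = E) (ME : M *m E = k *: E) (EM : E *m M = k *: E)
  (MM : M *m M = a%:M + b *: M + c *: E).

Let lin x y z : 'M[F]_n := x%:M + y *: M + z *: E.

Local Ltac mx_ring := apply/matrixP=> ? ?; rewrite !mxE;
  case: (_ == _); rewrite ?mulr1n ?mulr0n; ring.

Let lin_mul x y z x' y' z' :
  lin x y z *m lin x' y' z' =
  lin (x * x' + y * y' * a) (x * y' + y * x' + y * y' * b)
      (x * z' + z * x' + y * y' * c + (y * z' + z * y') * k + z * z').
Proof.
rewrite /lin !mulmxDl !mulmxDr -!scalemxAl -!scalemxAr !mul_scalar_mx !mul_mx_scalar.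
by rewrite MM ME EM idE; mx_ring.
Qed.

Lemma mxtrace_quadratic_algebra (t s : F) :
    s != 0 -> b = 2 * t + s -> a = - (t * (t + s)) -> k ^+ 2 = a + b * k + c ->
  exists r : nat, \tr M = t * n%:R + s * r%:R + (k - t) * \tr E.
Proof.
move=> nz_s def_b def_a kk; set A := M - k *: E.
have AE : A *m E = 0.
  have -> : A = lin 0 1 (- k) by mx_ring.
  have -> : E = lin 0 0 1 by mx_ring.
  by rewrite lin_mul; mx_ring.
have AtQ u : A - u *: (1%:M - E) = lin (- u) 1 (u - k) by mx_ring.
have def_c : c = k ^+ 2 - a - b * k by rewrite kk; ring.
have AtQ_AtsQ : (A - t *: (1%:M - E)) *m (A - (t + s) *: (1%:M - E)) = 0.
  by rewrite !AtQ lin_mul def_c def_a def_b; mx_ring.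
have trA := mxtrace_quadratic nz_s idE AE AtQ_AtsQ.
exists (\rank (A - t *: (1%:M - E))).
have -> : M = A + k *: E by rewrite subrK.
by rewrite mxtraceD mxtraceZ trA; ring.
Qed.

End QuadraticMatrixAlgebra.

Lemma nrep1 (gT : finGroupType) (D : {set gT}) : nrep D 1%g = #|D|.
Proof.
have inj_diag : injective (fun x : gT => (x, x)) by move=> x y [].
rewrite /nrep -(card_imset D inj_diag).
apply: eq_card => -[x y]; rewrite inE /= -eq_mulgV1.
apply/andP/imsetP => [[xD /andP[_ /eqP <-]] | [z zD [-> ->]]]; first by exists x.
by rewrite zD eqxx.
Qed.

Lemma sum_mulgV_nrep (gT : finGroupType) (G : {group gT}) (D : {set gT})
    (V : nmodType) (F : gT -> V) : D \subset G ->
  \sum_(d in D) \sum_(e in D) F (d * e^-1)%g = \sum_(g in G) F g *+ nrep D g.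
Proof.
move=> sDG; rewrite pair_big_dep.
rewrite (partition_big (fun xy : gT * gT => (xy.1 * xy.2^-1)%g) (mem G)); last first.
  by case=> x y /andP[xD yD]; rewrite /= groupM ?groupV ?(subsetP sDG).
apply: eq_bigr => g _; rewrite (eq_bigr (fun=> F g)); last by move=> xy /andP[_ /eqP->].
by rewrite sumr_const; congr (_ *+ _); apply: eq_card => xy; rewrite inE andbA.
Qed.

Lemma card_classI_cent (gT : finGroupType) (G : {group gT}) (D : {set gT}) h :
    D \subset G ->
  (#|(h ^: G)%g :&: D| * #|'C_G[h]%g|)%:R
    = \sum_i 'chi[G]_i h * (\sum_(d in D) 'chi_i d)^*.
Proof.
move=> sDG; under eq_bigr do rewrite rmorph_sum mulr_sumr.
rewrite exchange_big /= (eq_bigr (fun d => #|'C_G[h]%g|%:R *+ (d \in h ^: G)%g)).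
  under eq_bigr do rewrite mulrb.
  rewrite -big_mkcondr sumr_const natrM mulr_natl; congr (_ *+ _).
  by apply: eq_card => d; rewrite !inE andbC.
move=> d dD; rewrite second_orthogonality_relation ?(subsetP sDG) //.
by rewrite class_sym.
Qed.

Lemma theta2_spec k lam mu s : s%:Z ^+ 2 = PDS_Delta k lam mu ->
  lam%:Z - mu%:Z = 2 * theta2 lam mu s + s%:Z /\
  k%:Z - mu%:Z = - (theta2 lam mu s * (theta2 lam mu s + s%:Z)).
Proof.
rewrite /PDS_Delta /theta2 expr2 => Delta_s.
set x := lam%:Z - mu%:Z - s%:Z.
have := divz_eq x 2; have := modz_ge0 x (isT : (2 : int) != 0).
have := ltz_pmod x (isT : (0 : int) < 2).
set r := (x %% 2)%Z => r_lt2 r_ge0 def_x.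
have r0 : r = 0 by rewrite /x in def_x; nia.
rewrite r0 addr0 /x in def_x; split; nia.
Qed.

Section PartialDifferenceSet.

Variables (gT : finGroupType) (G : {group gT}) (D : {set gT}) (v k lam mu : nat).
Hypotheses (pdsD : is_PDS G D v k lam mu) (regD : regular_PDS D).

Let sDG : D \subset G. Proof. by case: pdsD. Qed.

Lemma sum_nrep_PDS (R : pzRingType) (V : lmodType R) (F : gT -> V) :
  \sum_(g in G) F g *+ nrep D g =
    (k%:R - mu%:R) *: F 1%g + (lam%:R - mu%:R) *: \sum_(g in D) F g
      + mu%:R *: \sum_(g in G) F g.
Proof.
have [_ _ cardD nrepD] := pdsD; have [_ notD1] := regD.
have -> : \sum_(g in D) F g = \sum_(g in G) (g \in D)%:R *: F g.
  rewrite [RHS](eq_bigr (fun g => if g \in D then F g else 0)); last first.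
    by move=> g _; case: (g \in D); rewrite ?scale1r ?scale0r.
  rewrite -big_mkcondr; apply: eq_bigl => g.
  by case gD: (g \in D); rewrite ?andbT ?andbF ?(subsetP sDG).
have -> : F 1%g = \sum_(g in G) (g == 1%g)%:R *: F g.
  rewrite (bigD1 1%g) //= eqxx scale1r big1 ?addr0 // => g /andP[_ /negbTE ->].
  by rewrite scale0r.
rewrite !scaler_sumr -!big_split /=; apply: eq_bigr => g Gg.
rewrite !scalerA -!scalerDl -scaler_nat; congr (_ *: _).
have [->|ntg] := eqVneq g 1%g.
  by rewrite nrep1 cardD (negbTE notD1) !mulr1 !mulr0 addr0 subrK.
rewrite nrepD // !mulr0 add0r.
by case: (g \in D); rewrite ?mulr1 ?mulr0 ?add0r ?subrK.
Qed.

Lemma PDS_card_sqr (R : pzRingType) :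
  k%:R ^+ 2 = (k%:R - mu%:R) + (lam%:R - mu%:R) * k%:R + mu%:R * #|G|%:R :> R.
Proof.
have [_ _ cardD _] := pdsD.
have := sum_mulgV_nrep (fun=> 1 : R^o) sDG; rewrite sum_nrep_PDS !sumr_const cardD.
by rewrite expr2 mulr_natr => ->; congr (_ + _ + _); apply: mulr1.
Qed.

Lemma cfRepr_sum_PDS n (rG : mx_representation algC G n) (t s : algC) :
    s != 0 -> lam%:R - mu%:R = 2 * t + s -> k%:R - mu%:R = - (t * (t + s)) ->
  exists r : nat,
    \sum_(d in D) cfRepr rG d = t * n%:R + s * r%:R + (k%:R - t) * '[cfRepr rG, 1].
Proof.
move=> nz_s def_b def_a; have [_ _ cardD _] := pdsD; have [invD _] := regD.
have nz_G : #|G|%:R != 0 :> algC by rewrite pnatr_eq0 -lt0n cardG_gt0.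
set M := \sum_(d in D) rG d; set S := \sum_(g in G) rG g; set E := #|G|%:R^-1 *: S.
have rG_E x : x \in G -> rG x *m E = E.
  move=> Gx; rewrite /E -scalemxAr; congr (_ *: _).
  rewrite /S mulmx_sumr [RHS](reindex_inj (mulgI x)) /=.
  by apply: eq_big => [g | g Gg]; rewrite ?groupMl ?repr_mxM.
have E_rG x : x \in G -> E *m rG x = E.
  move=> Gx; rewrite /E -scalemxAl; congr (_ *: _).
  rewrite /S mulmx_suml [RHS](reindex_inj (mulIg x)) /=.
  by apply: eq_big => [g | g Gg]; rewrite ?groupMr ?repr_mxM.
have ME : M *m E = k%:R *: E.
  rewrite mulmx_suml (eq_bigr (fun=> E)) => [|d dD]; last by rewrite rG_E ?(subsetP sDG).
  by rewrite sumr_const cardD scaler_nat.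
have EM : E *m M = k%:R *: E.
  rewrite mulmx_sumr (eq_bigr (fun=> E)) => [|d dD]; last by rewrite E_rG ?(subsetP sDG).
  by rewrite sumr_const cardD scaler_nat.
have EE : E *m E = E.
  rewrite {1}/E -scalemxAl /S mulmx_suml (eq_bigr (fun=> E)) => [|g Gg]; last exact: rG_E.
  by rewrite sumr_const -scaler_nat scalerA mulVf ?scale1r.
have MM : M *m M = (k%:R - mu%:R)%:M + (lam%:R - mu%:R) *: M + (mu%:R * #|G|%:R) *: E.
  rewrite /E scalerA mulfK // -scalemx1 -(repr_mx1 rG).
  rewrite -sum_nrep_PDS -sum_mulgV_nrep // mulmx_suml; apply: eq_bigr => d dD.
  rewrite mulmx_sumr (reindex_inj invg_inj) /=; apply: eq_big => [e | e eD].
    apply/idP/idP => [eVD | eD]; rewrite -invD; last exact: imset_f.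
    by rewrite -[e]invgK imset_f.
  by rewrite repr_mxM ?(subsetP sDG).
have [r trM] := mxtrace_quadratic_algebra EE ME EM MM nz_s def_b def_a (PDS_card_sqr _).
have trM_sum : \tr M = \sum_(d in D) cfRepr rG d.
  by rewrite raddf_sum; apply: eq_bigr => d dD; rewrite cfunE (subsetP sDG d dD) mulr1n.
have trE_dot : \tr E = '[cfRepr rG, 1].
  rewrite cfdotE mxtraceZ raddf_sum; congr (_ * _); apply: eq_bigr => g Gg.
  by rewrite cfunE cfun1E Gg mulr1n conjC1 mulr1.
by exists r; rewrite -trM_sum -trE_dot.
Qed.

Lemma irr_sum_PDS (i : Iirr G) (t s : algC) :
    s != 0 -> lam%:R - mu%:R = 2 * t + s -> k%:R - mu%:R = - (t * (t + s)) ->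
  exists r : nat,
    \sum_(d in D) 'chi_i d = t * 'chi_i 1%g + s * r%:R + (k%:R - t) * (i == 0)%:R.
Proof.
move=> nz_s def_b def_a; have [r sumD] := cfRepr_sum_PDS 'Chi_i nz_s def_b def_a.
by exists r; rewrite -irrRepr sumD cfRepr1 irrRepr -irr0 cfdot_irr.
Qed.

Lemma PDS_class_count_mod (s : nat) h :
    (mu < k)%N -> s%:Z ^+ 2 = PDS_Delta k lam mu -> h \in G ->
  ((#|(h ^: G)%g :&: D| * #|'C_G[h]%g|)%:Z
     = theta2 lam mu s * (#|G| * (h == 1%g))%:Z + (k%:Z - theta2 lam mu s)
     %[mod s%:Z])%Z.
Proof.
move=> lt_mu_k Delta_s Gh; have [def_b def_a] := theta2_spec Delta_s.
set T := theta2 lam mu s in def_b def_a *; set t : algC := T%:~R.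
have nz_s : s%:R != 0 :> algC.
  rewrite pnatr_eq0; apply: contraTneq lt_mu_k => s0.
  by move: Delta_s; rewrite s0 /PDS_Delta expr2 => ?; apply/negP; nia.
have def_b' : lam%:R - mu%:R = 2 * t + s%:R :> algC.
  by have := congr1 (intr : int -> algC) def_b; rewrite !rmorphB rmorphD rmorphM.
have def_a' : k%:R - mu%:R = - (t * (t + s%:R)) :> algC.
  by have := congr1 (intr : int -> algC) def_a; rewrite rmorphB rmorphN rmorphM rmorphD.
have [r sumD] := fin_all_exists (fun i => irr_sum_PDS i nz_s def_b' def_a').
set X := \sum_i (r i)%:R * 'chi[G]_i h.
have count : (#|(h ^: G)%g :&: D| * #|'C_G[h]%g|)%:R
    = t * (#|G| * (h == 1%g))%:R + (k%:R - t) + s%:R * X :> algC.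
  rewrite (card_classI_cent _ sDG).
  under eq_bigr do rewrite sumD !rmorphD !rmorphM /= !rmorph_nat rmorphB /= rmorph_nat
    /t rmorph_int !mulrDr.
  rewrite !big_split /= -/t.
  have -> : \sum_i 'chi[G]_i h * (t * ('chi_i 1%g)^*) = t * (#|G| * (h == 1%g))%:R.
    under eq_bigr do rewrite mulrCA; rewrite -mulr_sumr; congr (_ * _).
    rewrite second_orthogonality_relation // class1G inE.
    by have [->|_] := eqVneq h 1%g; rewrite ?cent11T ?setIT ?muln1 ?muln0.
  have -> : \sum_i 'chi[G]_i h * (s%:R * (r i)%:R) = s%:R * X.
    by rewrite mulr_sumr; apply: eq_bigr => i _; rewrite mulrC -mulrA.
  have -> : \sum_i 'chi[G]_i h * ((k%:R - t) * (i == 0)%:R) = k%:R - t.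
    rewrite (bigD1 0) //= big1 ?addr0; last by move=> i /negbTE->; rewrite !mulr0.
    by rewrite irr0 cfun1E Gh mulr1 mul1r.
  by rewrite addrAC.
have X_int : X \in Num.int.
  apply: Cint_rat_Aint.
    have -> : X = ((#|(h ^: G)%g :&: D| * #|'C_G[h]%g|)%:R
                   - t * (#|G| * (h == 1%g))%:R - (k%:R - t)) / s%:R.
      by rewrite count; field.
    by rewrite !(rpredB, rpredM, rpredV, rpred_nat, rpred_int).
  by apply: rpred_sum => i _; rewrite rpredM ?rpred_nat ?Aint_irr.
have [z def_X] := intrP X_int.
have -> : (#|(h ^: G)%g :&: D| * #|'C_G[h]%g|)%:Z
    = z * s%:Z + (T * (#|G| * (h == 1%g))%:Z + (k%:Z - T)).
  apply: (@intr_inj algC); rewrite [LHS]count def_X.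
  by rewrite !rmorphD !rmorphM /= intrN -!pmulrn -/t; ring.
exact: modzMDl.
Qed.

End PartialDifferenceSet.

Local Close Scope ring_scope.

Theorem mainTheorem16 (gT : finGroupType) (G : {group gT}) (D : {set gT})
    (v k lam mu s p : nat) :
  is_PDS G D v k lam mu -> regular_PDS D ->
  (0 < mu)%N -> (mu < k)%N ->
  (s%:Z ^+ 2)%R = PDS_Delta k lam mu ->
  prime p -> (p %| s)%N ->
  (forall h, h \in G -> h != 1%g ->
     ~~ (p ^ logn p s %| #|('C_G[h])%g|)%N ->
     ((#|((h ^: G)%g :&: D)| * #|('C_G[h])%g|)%:Z = k%:Z - theta2 lam mu s
        %[mod (p ^ logn p s)%:Z])%Z)
  /\
  ((#|(((1%g : gT) ^: G)%g :&: D)| * #|('C_G[1%g])%g|)%:Z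
     = k%:Z + theta2 lam mu s * (#|G|%:Z - 1)
     %[mod (p ^ logn p s)%:Z])%Z.
Proof.
move=> pdsD regD _ lt_mu_k Delta_s _ _.
have count_mod := PDS_class_count_mod pdsD regD lt_mu_k Delta_s.
have mod_dvd a b : (a = b %[mod s%:Z])%Z -> (a = b %[mod (p ^ logn p s)%:Z])%Z.
  move/eqP; rewrite eqz_mod_dvd => s_dvd_ab; apply/eqP; rewrite eqz_mod_dvd.
  by apply: dvdz_trans s_dvd_ab; rewrite dvdzE pfactor_dvdnn.
split=> [h Gh nt_h _ | ]; apply: mod_dvd; rewrite count_mod ?group1 //.
  by rewrite (negbTE nt_h) muln0 mulr0 add0r.
by rewrite eqxx muln1; congr (_ %% _)%Z; ring.
Qed.
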